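(* Let $\mathcal{X}=\mathcal{X}^{(1)}\times\cdots\times\mathcal{X}^{(d)}$ with each $\mathcal{X}^{(j)}$ finite, $G$ an undirected graph on $\{1,\dots,d\}$ and $(C_i)_{i=1}^n$ cliques of $G$ (possibly overlapping) with $\bigcup_iC_i=\{1,\dots,d\}$. Let $\pi\in\mathcal{P}(\mathcal{X})$ be positive, $P\in\mathcal{L}(\mathcal{X})$, and let $M\in\mathcal{L}(\mathcal{X})$ be $(C_i)_{i=1}^n$-factorizable with respect to $G$ and $(L_i)_{i=1}^n$, $L_i\in\mathcal{L}(\mathcal{X}^{(C_i)})$. If $Z(x,(L_i)_{i=1}^n)\ge Z(x,(P^{(C_i)}_\pi)_{i=1}^n)$ for all $x\in\mathcal{X}$, then $D^\pi_{KL}(P\|M)\ge D^\pi_{KL}(P\|\mathbf{P}_\pi)+\sum_{i=1}^nD^{\pi^{(C_i)}}_{KL}(P^{(C_i)}_\pi\|L_i)$. Consequently $\mathbf{P}_\pi$ is the unique minimizer of $D^\pi_{KL}(P\|M)$ over all $(C_i)$-factorizable $M$ (w.r.t. $G$ and some $(L_i)$) with $Z(x,(L_i)_{i=1}^n)\ge Z(x,(P^{(C_i)}_\pi)_{i=1}^n)$ for all $x$, with minimum value $D^\pi_{KL}(P\|\mathbf{P}_\pi)$.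
   Context: $D_{KL}^{\pi}(M\|L):=\sum_{x,y}\pi(x)M(x,y)\ln\frac{M(x,y)}{L(x,y)}$. A clique of $G$ is a vertex set any two of whose elements are joined by an edge. For $C\subseteq\{1,\dots,d\}$: $\mathcal{X}^{(C)}=\prod_{j\in C}\mathcal{X}^{(j)}$, $x^{(C)}=(x^j)_{j\in C}$, $\pi^{(C)}(x^{(C)})=\sum_{x^{(-C)}}\pi(x)$, $P^{(C)}_\pi(x^{(C)},y^{(C)}):=\frac{\sum_{x^{(-C)},y^{(-C)}}\pi(x)P(x,y)}{\pi^{(C)}(x^{(C)})}$. $M$ is $(C_i)_{i=1}^n$-factorizable w.r.t. $G$ and $(L_i)$ if $M(x,y)=\frac{1}{Z(x,(L_i)_{i=1}^n)}\prod_{i=1}^nL_i(x^{(C_i)},y^{(C_i)})$ with $Z(x,(L_i)_{i=1}^n):=\sum_{y\in\mathcal{X}}\prod_{i=1}^nL_i(x^{(C_i)},y^{(C_i)})$. $\mathbf{P}_\pi(x,y):=\frac{1}{Z(x,(P^{(C_i)}_\pi)_{i=1}^n)}\prod_{i=1}^nP^{(C_i)}_\pi(x^{(C_i)},y^{(C_i)})$. *)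

From HB Require Import structures.
From mathcomp Require Import all_boot all_order all_algebra.
From mathcomp Require Import all_classical all_reals.
From mathcomp Require Import exp.

Set Implicit Arguments.
Unset Strict Implicit.
Unset Printing Implicit Defensive.

Import Order.TTheory GRing.Theory Num.Theory.
Local Open Scope ring_scope.

Section Defs.
Variable R : realType.

Definition is_prob (S : finType) (mu : S -> R) : Prop :=
  (forall s, 0 <= mu s) /\ \sum_(s : S) mu s = 1.

Definition is_kernel (S : finType) (K : S -> S -> R) : Prop :=
  (forall s t, 0 <= K s t) /\ (forall s, \sum_(t : S) K s t = 1).

Definition kl_term (p m l : R) : \bar R :=
  if p * m == 0 then 0%E
  else if l == 0 then +oo%E
  else (p * m * ln (m / l))%:E.

Definition KL (S : finType) (pi : S -> R) (M L : S -> S -> R) : \bar R :=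
  (\sum_(x : S) \sum_(y : S) kl_term (pi x) (M x y) (L x y))%E.

Variable d : nat.
Variable T : 'I_d -> finType.

Definition Xs := {dffun forall j : 'I_d, T j}.

Definition XC (C : {set 'I_d}) :=
  {dffun forall j : {j : 'I_d | j \in C}, T (val j)}.

Definition restr (C : {set 'I_d}) (x : Xs) : XC C :=
  [ffun j : {j : 'I_d | j \in C} => x (val j)].

Definition marg (C : {set 'I_d}) (pi : Xs -> R) (u : XC C) : R :=
  \sum_(x : Xs | restr C x == u) pi x.

Definition kmarg (C : {set 'I_d}) (pi : Xs -> R) (P : Xs -> Xs -> R)
    (u v : XC C) : R :=
  (\sum_(x : Xs | restr C x == u) \sum_(y : Xs | restr C y == v) pi x * P x y)
  / marg pi u.

Definition clique (G : rel 'I_d) (C : {set 'I_d}) : Prop :=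
  forall i j, i \in C -> j \in C -> i != j -> G i j.

Variable n : nat.

Definition Zf (C : 'I_n -> {set 'I_d})
    (L : forall i : 'I_n, XC (C i) -> XC (C i) -> R) (x : Xs) : R :=
  \sum_(y : Xs) \prod_(i < n) L i (restr (C i) x) (restr (C i) y).

Definition factorizable (G : rel 'I_d) (C : 'I_n -> {set 'I_d})
    (L : forall i : 'I_n, XC (C i) -> XC (C i) -> R) (M : Xs -> Xs -> R) : Prop :=
  (forall i, clique G (C i)) /\
  forall x y, M x y = (\prod_(i < n) L i (restr (C i) x) (restr (C i) y)) / Zf L x.

Definition Pfam (C : 'I_n -> {set 'I_d}) (pi : Xs -> R) (P : Xs -> Xs -> R) :
    forall i : 'I_n, XC (C i) -> XC (C i) -> R :=
  fun i => kmarg pi P (C:=C i).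

Definition Pbold (C : 'I_n -> {set 'I_d}) (pi : Xs -> R) (P : Xs -> Xs -> R)
    (x y : Xs) : R :=
  (\prod_(i < n) @Pfam C pi P i (restr (C i) x) (restr (C i) y)) / Zf (@Pfam C pi P) x.

Definition admissible (G : rel 'I_d) (C : 'I_n -> {set 'I_d})
    (pi : Xs -> R) (P : Xs -> Xs -> R) (M : Xs -> Xs -> R) : Prop :=
  exists L : forall i : 'I_n, XC (C i) -> XC (C i) -> R,
    (forall i, is_kernel (L i)) /\ is_kernel M /\ factorizable G L M /\
    (forall x, Zf (@Pfam C pi P) x <= Zf L x).

End Defs.

Arguments is_prob {R S} mu.
Arguments is_kernel {R S} K.
Arguments KL {R S} pi M L.
Arguments restr {d T} C x.
Arguments marg {R d T} C pi u.
Arguments kmarg {R d T} C pi P u v.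
Arguments clique {d} G C.
Arguments Zf {R d T n} C L x.
Arguments factorizable {R d T n} G C L M.
Arguments Pfam {R d T n} C pi P i _ _.
Arguments Pbold {R d T n} C pi P x y.
Arguments admissible {R d T n} G C pi P M.

From HB Require Import structures.
From mathcomp Require Import all_boot all_order all_algebra.
From mathcomp Require Import all_classical all_reals.
From mathcomp Require Import exp.
From mathcomp Require Import lra.
Import Order.TTheory GRing.Theory Num.Theory.
Local Open Scope ring_scope.
Set Implicit Arguments.
Unset Strict Implicit.
Unset Printing Implicit Defensive.

(* Wherever pi(x) P(x,y) > 0, a factorized kernel satisfies
   ln M(x,y) = sum_i ln L_i(x^(C_i), y^(C_i)) - ln Z(x, (L_i)), and so does bold P_pi with
   the marginal kernels P^(C_i)_pi.  Hence ln (P/M) = ln (P / bold P_pi)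
   + sum_i ln (P^(C_i)_pi / L_i) + ln (Z(x,(L_i)) / Z(x,(P^(C_i)_pi))).  Integrating against
   pi(x) P(x,y), the middle terms become the marginal divergences (push the sum forward
   along x |-> x^(C_i)) and the last term is nonnegative by the hypothesis on Z.  Gibbs'
   inequality makes every divergence between kernels nonnegative, which gives minimality, and
   its equality case forces L_i = P^(C_i)_pi, i.e. M = bold P_pi.  If pi P is not absolutely
   continuous w.r.t. pi M, then D(P || M) = +oo and there is nothing to prove. *)

Section BigSums.
Variable R : numDomainType.

Lemma ler_sum_term (I : finType) (P : pred I) (F : I -> R) j :
  (forall i, P i -> 0 <= F i) -> P j -> F j <= \sum_(i | P i) F i.
Proof. by move=> F_ge0 Pj; rewrite (bigD1 j) //= lerDl sumr_ge0 // => i /andP[/F_ge0]. Qed.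

End BigSums.

Section Logarithm.
Variable R : realType.

Lemma ln_prod (I : Type) (r : seq I) (P : pred I) (F : I -> R) :
  (forall i, P i -> 0 < F i) -> ln (\prod_(i <- r | P i) F i) = \sum_(i <- r | P i) ln (F i).
Proof.
move=> F_gt0; elim: r => [|i r IH]; first by rewrite !big_nil ln1.
rewrite !big_cons; case: ifP => // Pi.
by rewrite lnM ?posrE ?F_gt0 ?IH // prodr_gt0.
Qed.

Lemma ln_le_subr1 (t : R) : 0 < t -> ln t <= t - 1.
Proof. by move=> t_gt0; have := expR_ge1Dx (ln t); rewrite lnK ?posrE //; lra. Qed.

Lemma ln_lt_subr1 (t : R) : 0 < t -> t != 1 -> ln t < t - 1.
Proof.
move=> t_gt0 t_neq1; have : ln t != 0 by rewrite ln_eq0.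
by move/expR_gt1Dx; rewrite lnK ?posrE //; lra.
Qed.

(* The Gibbs integrand: its correction term -(k - l) sums to 0 along a row of two kernels. *)
Definition kl_gap (k l : R) : R := k * (ln k - ln l) - (k - l).

Lemma kl_gapE (k l : R) : 0 < k -> 0 < l -> kl_gap k l = k * (l / k - 1 - ln (l / k)).
Proof.
move=> k_gt0 l_gt0; rewrite ln_div ?posrE // /kl_gap !mulrBr mulrCA divff ?gt_eqF //.
by rewrite mulr1; lra.
Qed.

Lemma kl_gap_ge0 (k l : R) : 0 <= k -> 0 <= l -> (k != 0 -> 0 < l) -> 0 <= kl_gap k l.
Proof.
move=> k_ge0 l_ge0 l_gt0; have [->|k_neq0] := eqVneq k 0.
  by rewrite /kl_gap mul0r; lra.
have k_gt0 : 0 < k by rewrite lt_def k_neq0.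
rewrite kl_gapE ?l_gt0 //; apply: mulr_ge0; first exact: ltW.
by rewrite subr_ge0 ln_le_subr1 // divr_gt0 ?l_gt0.
Qed.

Lemma kl_gap_eq0 (k l : R) : 0 <= k -> (k != 0 -> 0 < l) -> kl_gap k l = 0 -> l = k.
Proof.
move=> k_ge0 l_gt0; have [->|k_neq0] := eqVneq k 0.
  by rewrite /kl_gap mul0r; lra.
have k_gt0 : 0 < k by rewrite lt_def k_neq0.
have lk_gt0 : 0 < l / k by rewrite divr_gt0 ?l_gt0.
rewrite kl_gapE ?l_gt0 // => /eqP; rewrite mulf_eq0 (negbTE k_neq0) /= subr_eq0.
apply: contraTeq => l_neq_k; rewrite gt_eqF // ln_lt_subr1 //.
by apply: contraNneq l_neq_k => /divr1_eq ->.
Qed.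

End Logarithm.

Section KullbackLeibler.
Variables (R : realType) (S : finType) (mu : S -> R) (K L : S -> S -> R).

(* Absolute continuity of mu (x) K w.r.t. mu (x) L: exactly when KL mu K L is finite. *)
Definition abs_cont : Prop := forall s t, mu s * K s t != 0 -> 0 < L s t.

Lemma kl_termE (p m l : R) : 0 <= p -> 0 <= m -> (p * m != 0 -> 0 < l) ->
  kl_term p m l = (p * m * (ln m - ln l))%:E.
Proof.
rewrite /kl_term => p_ge0 m_ge0 l_gt0; case: eqP => [->|/eqP pm_neq0].
  by rewrite mul0r.
have m_gt0 : 0 < m.
  by rewrite lt_def m_ge0 andbT; apply: contraNneq pm_neq0 => ->; rewrite mulr0.
by rewrite gt_eqF ?l_gt0 // ln_div ?posrE ?l_gt0.
Qed.

Lemma kl_term_neqNy (p m l : R) : kl_term p m l != -oo%E.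
Proof. by rewrite /kl_term; case: ifP => _ //; case: ifP. Qed.

Lemma KLE : (forall s, 0 <= mu s) -> (forall s t, 0 <= K s t) -> abs_cont ->
  KL mu K L = (\sum_s \sum_t mu s * K s t * (ln (K s t) - ln (L s t)))%:E.
Proof.
move=> mu_ge0 K_ge0 KL_ac; rewrite /KL -sumEFin; apply: eq_bigr => s _.
by rewrite -sumEFin; apply: eq_bigr => t _; rewrite kl_termE // => /KL_ac.
Qed.

Lemma KL_not_abs_cont : (forall s t, 0 <= L s t) -> ~ abs_cont -> KL mu K L = +oo%E.
Proof.
move=> L_ge0 /existsNP[s /existsNP[t /not_implyP[muK_neq0 /negP]]].
rewrite lt_def L_ge0 andbT negbK => /eqP L0.
have row_neqNy s' : (\sum_t' kl_term (mu s') (K s' t') (L s' t') != -oo)%E.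
  by apply/negP => /eqP/esum_eqNyP[t' [_ _ /eqP]]; rewrite (negbTE (kl_term_neqNy _ _ _)).
rewrite /KL; apply/esum_eqyP => [s' _|]; first exact: row_neqNy.
exists s; split => //; apply/esum_eqyP => [t' _|]; first exact: kl_term_neqNy.
by exists t; split => //; rewrite /kl_term (negbTE muK_neq0) L0 eqxx.
Qed.

Hypotheses (mu_gt0 : forall s, 0 < mu s) (K_ker : is_kernel K) (L_ker : is_kernel L).

Lemma abs_cont_kernel s t : abs_cont -> K s t != 0 -> 0 < L s t.
Proof. by move=> KL_ac K_neq0; apply/KL_ac/mulf_neq0 => //; exact: lt0r_neq0. Qed.

Lemma KL_kernelE : abs_cont ->
  KL mu K L = (\sum_s mu s * \sum_t kl_gap (K s t) (L s t))%:E.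
Proof.
move=> KL_ac; rewrite (KLE (fun s => ltW (mu_gt0 s)) K_ker.1 KL_ac).
congr (_%:E); apply: eq_bigr => s _.
rewrite /kl_gap sumrB sumrB K_ker.2 L_ker.2 subrr subr0 mulr_sumr.
by apply: eq_bigr => t _; rewrite mulrA.
Qed.

Lemma kl_gap_kernel_ge0 s t : abs_cont -> 0 <= kl_gap (K s t) (L s t).
Proof.
by move=> KL_ac; apply: kl_gap_ge0 (K_ker.1 s t) (L_ker.1 s t) _; exact: abs_cont_kernel.
Qed.

Lemma row_kl_gap_ge0 s : abs_cont -> 0 <= mu s * \sum_t kl_gap (K s t) (L s t).
Proof.
move=> KL_ac; apply: mulr_ge0; first exact: ltW.
by apply: sumr_ge0 => t _; exact: kl_gap_kernel_ge0.
Qed.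

Lemma KL_kernel_ge0 : (0 <= KL mu K L)%E.
Proof.
have [KL_ac|KL_nac] := pselect abs_cont; last first.
  by rewrite KL_not_abs_cont ?leey //; exact: L_ker.1.
have sum_ge0 : 0 <= \sum_s mu s * \sum_t kl_gap (K s t) (L s t).
  by apply: sumr_ge0 => s _; exact: row_kl_gap_ge0.
by rewrite KL_kernelE // lee_fin.
Qed.

Lemma KL_kernel_eq0 : KL mu K L = 0%E -> L = K.
Proof.
have [KL_ac|KL_nac] := pselect abs_cont; last first.
  by rewrite KL_not_abs_cont //; exact: L_ker.1.
rewrite KL_kernelE // => -[/psumr_eq0P row0].
apply/funext => s; apply/funext => t; apply: kl_gap_eq0 (K_ker.1 s t) _ _.
  exact: abs_cont_kernel.
have /eqP := row0 (fun s _ => row_kl_gap_ge0 s KL_ac) s isT.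
rewrite mulf_eq0 gt_eqF //= => /eqP/psumr_eq0P-> // t' _.
exact: kl_gap_kernel_ge0.
Qed.

End KullbackLeibler.

Section Marginals.
Variables (R : realType) (d : nat) (T : 'I_d -> finType).

Definition glue (D : {set 'I_d}) (u : XC T D) (x : Xs T) : Xs T :=
  [ffun j => if (j \in D) =P true is ReflectT jD then u (exist _ j jD) else x j].

Lemma restr_glue D (u : XC T D) x : restr D (glue u x) = u.
Proof.
apply/ffunP => -[j jD]; rewrite !ffunE /=.
by case: eqP => [jD'|]; [rewrite (bool_irrelevance jD' jD) | rewrite jD].
Qed.

Lemma sum_by_restr D (F : Xs T -> R) :
  \sum_(v : XC T D) \sum_(y | restr D y == v) F y = \sum_y F y.
Proof. by rewrite (partition_big (restr D) predT). Qed.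

Variables (pi : Xs T -> R) (P : Xs T -> Xs T -> R).
Hypotheses (pi_prob : is_prob pi) (pi_gt0 : forall x, 0 < pi x) (P_ker : is_kernel P).

Definition jmarg D (u v : XC T D) : R :=
  \sum_(x | restr D x == u) \sum_(y | restr D y == v) pi x * P x y.

Lemma kmargE D (u v : XC T D) : kmarg D pi P u v = jmarg u v / marg D pi u.
Proof. by []. Qed.

Lemma piP_ge0 x y : 0 <= pi x * P x y.
Proof. exact: mulr_ge0 (ltW (pi_gt0 x)) (P_ker.1 x y). Qed.

Lemma piP_gt0 x y : pi x * P x y != 0 -> 0 < pi x * P x y.
Proof. by rewrite lt0r piP_ge0 andbT. Qed.

Lemma jmarg_ge0 D (u v : XC T D) : 0 <= jmarg u v.
Proof. by apply: sumr_ge0 => x _; apply: sumr_ge0 => y _; exact: piP_ge0. Qed.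

Lemma sum_jmarg D (u : XC T D) : \sum_v jmarg u v = marg D pi u.
Proof.
rewrite /jmarg exchange_big; apply: eq_bigr => x _.
by rewrite sum_by_restr -mulr_sumr P_ker.2 mulr1.
Qed.

Lemma marg_gt0 D (u : XC T D) : 0 < marg D pi u.
Proof.
(* [is_prob pi] is only needed to make [Xs T] inhabited, so that [u] can be glued to a point. *)
have [x0 _] : exists x0, true && (0 < pi x0).
  apply: psumr_neq0P => [x _|]; first exact: ltW.
  by rewrite pi_prob.2 => /eqP; rewrite oner_eq0.
apply: lt_le_trans (pi_gt0 (glue u x0)) _; apply: ler_sum_term; last exact/eqP/restr_glue.
by move=> x _; exact: ltW.
Qed.

Lemma kmarg_ker D : is_kernel (kmarg D pi P).
Proof.
split=> [u v|u]; first by rewrite kmargE divr_ge0 ?jmarg_ge0 ?ltW ?marg_gt0.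
by under eq_bigr do rewrite kmargE; rewrite -mulr_suml sum_jmarg divff // gt_eqF ?marg_gt0.
Qed.

Lemma mulr_marg_kmarg D (u v : XC T D) : marg D pi u * kmarg D pi P u v = jmarg u v.
Proof. by rewrite kmargE mulrC divfK // gt_eqF ?marg_gt0. Qed.

Lemma jmarg_ge_restr D x y : pi x * P x y <= jmarg (restr D x) (restr D y).
Proof.
have row_le : pi x * P x y <= \sum_(y' | restr D y' == restr D y) pi x * P x y'.
  by apply: ler_sum_term => // y' _; exact: piP_ge0.
apply: le_trans row_le (ler_sum_term
  (F := fun x' => \sum_(y' | restr D y' == restr D y) pi x' * P x' y') _ _) => //.
by move=> x' _; apply: sumr_ge0 => y' _; exact: piP_ge0.
Qed.

Lemma jmarg_neq0 D (u v : XC T D) : jmarg u v != 0 ->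
  exists x y, [/\ restr D x = u, restr D y = v & pi x * P x y != 0].
Proof.
move=> /eqP/psumr_neq0P[x _|x /andP[/eqP xu /lt0r_neq0/eqP]].
  by apply: sumr_ge0 => y _; exact: piP_ge0.
move=> /psumr_neq0P[y _|y /andP[/eqP yv /lt0r_neq0 piP_neq0]]; first exact: piP_ge0.
by exists x, y.
Qed.

Lemma sum_jmarg_restr D (g : XC T D -> XC T D -> R) :
  \sum_u \sum_v jmarg u v * g u v =
  \sum_x \sum_y pi x * P x y * g (restr D x) (restr D y).
Proof.
rewrite -[RHS](sum_by_restr D); apply: eq_bigr => u _.
under eq_bigr do rewrite /jmarg big_distrl.
under eq_bigr do under eq_bigr do rewrite big_distrl.
rewrite exchange_big /=; apply: eq_bigr => x /eqP <-.
rewrite -(sum_by_restr D); apply: eq_bigr => v _.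
by apply: eq_bigr => y /eqP <-.
Qed.

Lemma KL_kmargE D (L : XC T D -> XC T D -> R) :
  (forall x y, pi x * P x y != 0 -> 0 < L (restr D x) (restr D y)) ->
  KL (marg D pi) (kmarg D pi P) L =
  (\sum_x \sum_y pi x * P x y *
     (ln (kmarg D pi P (restr D x) (restr D y)) - ln (L (restr D x) (restr D y))))%:E.
Proof.
move=> L_gt0; rewrite KLE; last 3 first.
- by move=> u; exact/ltW/marg_gt0.
- exact: (kmarg_ker D).1.
- move=> u v; rewrite mulr_marg_kmarg => /jmarg_neq0[x [y [<- <-]]].
  exact: L_gt0.
congr (_%:E); rewrite -(sum_jmarg_restr (fun u v => ln (kmarg D pi P u v) - ln (L u v))).
apply: eq_bigr => u _.
by apply: eq_bigr => v _; rewrite mulr_marg_kmarg.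
Qed.

End Marginals.

Section Factorization.
Variables (R : realType) (d : nat) (T : 'I_d -> finType) (n : nat).
Variables (G : rel 'I_d) (C : 'I_n -> {set 'I_d}).

Lemma ln_factorized (L : forall i, XC T (C i) -> XC T (C i) -> R) x y :
  (forall i, 0 < L i (restr (C i) x) (restr (C i) y)) -> 0 < Zf C L x ->
  ln ((\prod_i L i (restr (C i) x) (restr (C i) y)) / Zf C L x) =
  \sum_i ln (L i (restr (C i) x) (restr (C i) y)) - ln (Zf C L x).
Proof. by move=> L_gt0 Z_gt0; rewrite ln_div ?posrE ?prodr_gt0 // ln_prod. Qed.

Variables (pi : Xs T -> R) (P : Xs T -> Xs T -> R).
Hypotheses (pi_prob : is_prob pi) (pi_gt0 : forall x, 0 < pi x) (P_ker : is_kernel P).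

Local Notation Pf := (Pfam C pi P).
Local Notation Pb := (Pbold C pi P).

Lemma Pfam_ker i : is_kernel (Pf i).
Proof. exact: kmarg_ker. Qed.

Lemma Pfam_restr_gt0 i x y : pi x * P x y != 0 -> 0 < Pf i (restr (C i) x) (restr (C i) y).
Proof.
move=> piP_neq0; rewrite /Pfam kmargE; apply: divr_gt0; last exact: marg_gt0.
exact: lt_le_trans (piP_gt0 pi_gt0 P_ker piP_neq0) (jmarg_ge_restr _ _ _ _ _).
Qed.

Lemma Zf_Pfam_gt0 x : 0 < Zf C Pf x.
Proof.
have [y /andP[_ Pxy_gt0]] : exists y, true && (0 < P x y).
  apply: psumr_neq0P => [y _|]; first exact: P_ker.1.
  by rewrite P_ker.2 => /eqP; rewrite oner_eq0.
have prod_gt0 : 0 < \prod_i Pf i (restr (C i) x) (restr (C i) y).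
  by apply: prodr_gt0 => i _; apply: Pfam_restr_gt0; rewrite mulf_neq0 ?lt0r_neq0.
apply: lt_le_trans prod_gt0 (ler_sum_term _ _) => // y' _.
by apply: prodr_ge0 => i _; exact: (Pfam_ker i).1.
Qed.

Lemma Pbold_ker : is_kernel Pb.
Proof.
split=> [x y|x]; rewrite /Pbold.
  apply: divr_ge0; last exact/ltW/Zf_Pfam_gt0.
  by apply: prodr_ge0 => i _; exact: (Pfam_ker i).1.
by rewrite -mulr_suml divff // gt_eqF ?Zf_Pfam_gt0.
Qed.

Lemma Pbold_abs_cont : abs_cont pi P Pb.
Proof.
move=> x y piP_neq0; rewrite /Pbold divr_gt0 ?Zf_Pfam_gt0 //.
by apply: prodr_gt0 => i _; exact: Pfam_restr_gt0.
Qed.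

Lemma Pbold_admissible : (forall i, clique G (C i)) -> admissible G C pi P Pb.
Proof.
move=> C_clique; exists Pf; split; first exact: Pfam_ker.
by split; [exact: Pbold_ker | split].
Qed.

Lemma KL_factorized_ge M (L : forall i, XC T (C i) -> XC T (C i) -> R) :
  (forall i, is_kernel (L i)) -> is_kernel M -> factorizable G C L M ->
  (forall x, Zf C Pf x <= Zf C L x) ->
  (KL pi P Pb + \sum_(i < n) KL (marg (C i) pi) (Pf i) (L i) <= KL pi P M)%E.
Proof.
move=> L_ker M_ker [_ M_def] Z_le.
have [PM_ac|PM_nac] := pselect (abs_cont pi P M); last first.
  by rewrite (KL_not_abs_cont M_ker.1 PM_nac) leey.
have L_gt0 i x y : pi x * P x y != 0 -> 0 < L i (restr (C i) x) (restr (C i) y).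
  move=> /PM_ac/lt0r_neq0; rewrite M_def mulf_eq0 negb_or => /andP[/prodf_neq0 L_neq0 _].
  by rewrite lt0r L_neq0 ?(L_ker i).1.
have ZL_gt0 x : 0 < Zf C L x := lt_le_trans (Zf_Pfam_gt0 x) (Z_le x).
have pi_ge0 x : 0 <= pi x := ltW (pi_gt0 x).
under eq_bigr => i _ do rewrite (KL_kmargE pi_prob pi_gt0 P_ker (L_gt0 i)).
rewrite (KLE pi_ge0 P_ker.1 PM_ac) (KLE pi_ge0 P_ker.1 Pbold_abs_cont).
rewrite sumEFin -EFinD lee_fin [X in _ + X]exchange_big -big_split /=.
apply: ler_sum => x _; rewrite [X in _ + X]exchange_big -big_split /=.
apply: ler_sum => y _; rewrite -mulr_sumr -mulrDr.
have [->|piP_neq0] := eqVneq (pi x * P x y) 0; first by rewrite !mul0r.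
apply: ler_wpM2l; first exact: piP_ge0.
rewrite sumrB M_def /Pbold (ln_factorized (fun i => L_gt0 i x y piP_neq0) (ZL_gt0 x)).
rewrite (ln_factorized (fun i => Pfam_restr_gt0 i piP_neq0) (Zf_Pfam_gt0 x)).
have : ln (Zf C Pf x) <= ln (Zf C L x) by rewrite ler_ln ?posrE ?Zf_Pfam_gt0.
lra.
Qed.

Lemma KL_kmarg_ge0 (L : forall i, XC T (C i) -> XC T (C i) -> R) i :
  is_kernel (L i) -> (0 <= KL (marg (C i) pi) (Pf i) (L i))%E.
Proof. by apply: KL_kernel_ge0 (Pfam_ker i) => u; exact: marg_gt0. Qed.

Lemma KL_Pbold_le M : admissible G C pi P M -> (KL pi P Pb <= KL pi P M)%E.
Proof.
move=> [L [L_ker [M_ker [M_fact Z_le]]]].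
apply: le_trans (KL_factorized_ge L_ker M_ker M_fact Z_le); apply: leeDl.
by apply: sume_ge0 => i _; exact: KL_kmarg_ge0.
Qed.

Lemma KL_Pbold_eq M : admissible G C pi P M -> KL pi P M = KL pi P Pb -> M = Pb.
Proof.
move=> [L [L_ker [M_ker [M_fact Z_le]]]] KL_eq.
have := KL_factorized_ge L_ker M_ker M_fact Z_le.
rewrite KL_eq (KLE (fun x => ltW (pi_gt0 x)) P_ker.1 Pbold_abs_cont).
rewrite -[X in (_ <= X)%E]adde0 leeD2lE // => sum_le0.
have /eqP : (\sum_(i < n) KL (marg (C i) pi) (Pf i) (L i) = 0)%E.
  by apply/le_anti; rewrite sum_le0 sume_ge0 // => i _; exact: KL_kmarg_ge0.
rewrite seq_psume_eq0 => [/allP KL0|i _]; last exact: KL_kmarg_ge0.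
have L_eq : L = Pf.
  apply: functional_extensionality_dep => i.
  apply: (KL_kernel_eq0 (marg_gt0 pi_prob pi_gt0 (D := C i)) (Pfam_ker i) (L_ker i)).
  by apply/eqP; exact: KL0 (mem_index_enum i).
by subst L; apply/funext => x; apply/funext => y; rewrite M_fact.2.
Qed.

End Factorization.

Theorem theorem2p28 (R : realType) (d : nat) (T : 'I_d -> finType)
    (G : rel 'I_d) (n : nat) (C : 'I_n -> {set 'I_d})
    (pi : Xs T -> R) (P : Xs T -> Xs T -> R) :
  symmetric G -> irreflexive G ->
  (forall i, clique G (C i)) ->
  \bigcup_(i < n) C i = [set: 'I_d] ->
  is_prob pi -> (forall x, 0 < pi x) ->
  is_kernel P ->
  (forall (M : Xs T -> Xs T -> R)
          (L : forall i : 'I_n, XC T (C i) -> XC T (C i) -> R),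
      (forall i, is_kernel (L i)) -> is_kernel M ->
      factorizable G C L M ->
      (forall x, Zf C (Pfam C pi P) x <= Zf C L x) ->
      (KL pi P (Pbold C pi P)
         + \sum_(i < n) KL (marg (C i) pi) (Pfam C pi P i) (L i)
       <= KL pi P M)%E)
  /\
  (admissible G C pi P (Pbold C pi P) /\
   (forall M, admissible G C pi P M -> (KL pi P (Pbold C pi P) <= KL pi P M)%E) /\
   (forall M, admissible G C pi P M -> KL pi P M = KL pi P (Pbold C pi P) ->
      M = Pbold C pi P)).
Proof.
(* Neither the graph axioms nor the covering of {1..d} by the cliques is needed. *)
move=> _ _ C_clique _ pi_prob pi_gt0 P_ker; split.
  move=> M L L_ker M_ker M_fact Z_le.
  exact: (KL_factorized_ge pi_prob pi_gt0 P_ker L_ker M_ker M_fact Z_le).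
split; first exact: (Pbold_admissible pi_prob pi_gt0 P_ker C_clique).
split=> M M_adm; first exact: (KL_Pbold_le pi_prob pi_gt0 P_ker M_adm).
exact: (KL_Pbold_eq pi_prob pi_gt0 P_ker M_adm).
Qed.
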